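(* Let $\mathcal Z$ be a finite zero-set, $k\ge0$ an integer, and $A\subseteq\mathbb Z_+^2$. If $A$ spans for $\mathcal Z$, then $A_{>k}$ spans for $\mathcal Z^{\swarrow k}$.
   Context: $\mathbb Z_+=\{0,1,2,\dots\}$; a zero-set is a union of rectangles $([0,a-1]\times[0,b-1])\cap\mathbb Z_+^2$. $\mathrm{row}(x,A)$ (resp. $\mathrm{col}(x,A)$) is the number of points of $A$ on the horizontal (resp. vertical) line through $x$; $\mathcal T(A)=A\cup\{x\notin A:(\mathrm{row}(x,A),\mathrm{col}(x,A))\notin\mathcal Z\}$; $A$ spans for $\mathcal Z$ if $\bigcup_t\mathcal T^t(A)=\mathbb Z_+^2$. $A_{>k}=\{x\in A:\mathrm{row}(x,A)>k\text{ or }\mathrm{col}(x,A)>k\}$. $\mathcal Z^{\swarrow k}=\{(u-k,v-k):(u,v)\in\mathcal Z,u\ge k,v\ge k\}$. *)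

From mathcomp Require Import all_boot.
Set Implicit Arguments. Unset Strict Implicit. Unset Printing Implicit Defensive.

Definition pt := (nat * nat)%type.
Definition pset := pt -> Prop.

(* Z is a zero-set: a union of rectangles ([0,a-1] x [0,b-1]) of Z_+^2. *)
Definition is_zero_set (Z : pset) : Prop :=
  exists R : pt -> Prop,
    forall p : pt, Z p <-> exists a b, R (a, b) /\ p.1 < a /\ p.2 < b.

Definition finite_set (Z : pset) : Prop :=
  exists s : seq pt, forall p, Z p -> p \in s.

Definition card_eq (P : pset) (n : nat) : Prop :=
  exists s : seq pt, [/\ uniq s, (forall y, y \in s <-> P y) & size s = n].

Definition row_set (x : pt) (A : pset) : pset := fun y => y.2 = x.2 /\ A y.
Definition col_set (x : pt) (A : pset) : pset := fun y => y.1 = x.1 /\ A y.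

(* (row(x,A), col(x,A)) is in Z; an infinite count is never in Z (Z ⊆ Z_+^2). *)
Definition rc_in (Z : pset) (x : pt) (A : pset) : Prop :=
  exists r c, [/\ card_eq (row_set x A) r, card_eq (col_set x A) c & Z (r, c)].

Definition T_op (Z : pset) (A : pset) : pset :=
  fun x => A x \/ (~ A x /\ ~ rc_in Z x A).

Fixpoint T_iter (Z : pset) (t : nat) (A : pset) : pset :=
  match t with 0 => A | t'.+1 => T_op Z (T_iter Z t' A) end.

Definition spans (Z : pset) (A : pset) : Prop :=
  forall x : pt, exists t, T_iter Z t A x.

(* "count > k", with infinite counts counted as > k *)
Definition card_gt (P : pset) (k : nat) : Prop :=
  ~ exists n, card_eq P n /\ n <= k.

Definition A_gt (A : pset) (k : nat) : pset :=
  fun x => A x /\ (card_gt (row_set x A) k \/ card_gt (col_set x A) k).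

Definition Z_shift (Z : pset) (k : nat) : pset :=
  fun p => exists u v, [/\ Z (u, v), k <= u, k <= v & p = (u - k, v - k)].

(* Let C be the closure of A_{>k} under the shifted rule and D := A \ A_{>k};
   every row and column meets D in at most k points. A point whose counts in
   C are (u - k, v - k) with (u, v) in Z has counts at most (u, v) in any set
   covered by C and D, so by induction T^t(A) is covered by C and D. As A
   spans, C and D cover the quadrant, and a point outside C would then have its
   infinite line covered by finitely many points. Finiteness of Z makes C
   closed under the rule: the counts of a never-reached point stay bounded
   along the iteration, hence stabilise. *)
From Stdlib Require Import Classical.
From mathcomp Require Import all_boot zify.

Set Implicit Arguments. Unset Strict Implicit. Unset Printing Implicit Defensive.

Definition atmost (P : pset) (n : nat) : Prop :=
  exists s : seq pt, size s <= n /\ forall y, P y -> y \in s.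

Definition restrict (L P : pset) : pset := fun y => L y /\ P y.

Lemma enum_of_bounded_uniq (P : pset) M :
  (forall l : seq pt, uniq l -> (forall y, y \in l -> P y) -> size l < M) ->
  exists l : seq pt, uniq l /\ (forall y, y \in l <-> P y).
Proof.
move=> bndP.
suff: forall d (l : seq pt), uniq l -> (forall y, y \in l -> P y) -> M - size l <= d ->
    exists l, uniq l /\ (forall y, y \in l <-> P y).
  by move/(_ M [::]); apply => //; rewrite subn0.
elim=> [|d IH] l ul lP hd; first by have := bndP l ul lP; lia.
case: (classic (forall y, P y -> y \in l)) => [Pl|].
  by exists l; split => // y; split; [apply: lP | apply: Pl].
move/not_all_ex_not => [y /(imply_to_and (P y)) [Py yNl]].
apply: (IH (y :: l)).
- by rewrite /= ul andbT; apply/negP.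
- by move=> z; rewrite inE => /orP [/eqP -> //|]; apply: lP.
- by have := bndP l ul lP; rewrite /=; lia.
Qed.

Lemma card_eq_size_le (P : pset) n (l : seq pt) :
  card_eq P n -> uniq l -> (forall y, y \in l -> P y) -> size l <= n.
Proof. by move=> [s [us sP <-]] ul lP; apply: uniq_leq_size => // y /lP /sP. Qed.

Lemma card_eq_ext (P Q : pset) n :
  (forall y, P y <-> Q y) -> card_eq P n -> card_eq Q n.
Proof. by move=> PQ [s [us sP <-]]; exists s; split => // y; rewrite sP. Qed.

Lemma atmost_card_eq (P : pset) n : card_eq P n -> atmost P n.
Proof. by move=> [s [_ sP <-]]; exists s; split => // y /sP. Qed.

Lemma card_eq_atmost (P : pset) n : atmost P n -> exists m, card_eq P m /\ m <= n.
Proof.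
move=> [s [sn Ps]].
have [l [ul lP]] : exists l : seq pt, uniq l /\ (forall y, y \in l <-> P y).
  apply: (@enum_of_bounded_uniq P n.+1) => l ul lP.
  exact: leq_trans (uniq_leq_size ul (fun y yl => Ps y (lP y yl))) sn.
exists (size l); split; first by exists l.
exact: leq_trans (uniq_leq_size ul (fun y yl => Ps y (proj1 (lP y) yl))) sn.
Qed.

Lemma atmost_sub (P Q : pset) n : (forall y, P y -> Q y) -> atmost Q n -> atmost P n.
Proof. by move=> PQ [s [sn Qs]]; exists s; split => // y /PQ /Qs. Qed.

Lemma atmost_cover (P Q R : pset) a b :
  (forall y, R y -> P y \/ Q y) -> atmost P a -> atmost Q b -> atmost R (a + b).
Proof.
move=> RPQ [s1 [sz1 Ps1]] [s2 [sz2 Qs2]]; exists (s1 ++ s2).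
split; first by rewrite size_cat; lia.
by move=> y /RPQ [/Ps1|/Qs2] ys; rewrite mem_cat ys ?orbT.
Qed.

Lemma atmost_of_inhabited (P : pset) n :
  (forall y, P y -> atmost P n) -> atmost P n.
Proof.
move=> Pn; case: (classic (exists y, P y)) => [[y /Pn //]|P0].
by exists [::]; split => // y Py; case: P0; exists y.
Qed.

Lemma atmost_of_not_card_gt (P : pset) k : ~ card_gt P k -> atmost P k.
Proof.
by move/NNPP => [n [Pn nk]]; have [s [sn Ps]] := atmost_card_eq Pn; exists s; split; first lia.
Qed.

Lemma row_not_atmost (x : pt) n : ~ atmost (fun y : pt => y.2 = x.2) n.
Proof.
move=> [s [sn rows]].
have u : uniq [seq (i, x.2) | i <- iota 0 n.+1].
  by rewrite map_inj_uniq ?iota_uniq // => i j [].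
have sub : {subset [seq (i, x.2) | i <- iota 0 n.+1] <= s}.
  by move=> z /mapP [i _ ->]; apply: rows.
by have := leq_trans (uniq_leq_size u sub) sn; rewrite size_map size_iota ltnn.
Qed.

Lemma rc_in_full_false Z (x : pt) : ~ rc_in Z x (fun _ => True).
Proof.
move=> [r [c [/atmost_card_eq rn _ _]]]; apply: (@row_not_atmost x r).
by apply: atmost_sub rn => y; split.
Qed.

Lemma rc_in_ext Z x (A B : pset) :
  (forall y, row_set x A y <-> row_set x B y) ->
  (forall y, col_set x A y <-> col_set x B y) -> rc_in Z x A -> rc_in Z x B.
Proof.
move=> AB_row AB_col [r [c [rA cA rcZ]]].
by exists r, c; split => //; [exact: card_eq_ext rA | exact: card_eq_ext cA].
Qed.

Section IncreasingChain.

Variable F : nat -> pset.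
Hypothesis F_mono : forall s s' y, s <= s' -> F s y -> F s' y.

Definition chain_union : pset := fun y => exists s, F s y.

Lemma chain_seq_sub (l : seq pt) :
  (forall y, y \in l -> chain_union y) -> exists s0, forall y, y \in l -> F s0 y.
Proof.
elim: l => [|a l IH] lU; first by exists 0.
have [s1 Fa] := lU a (mem_head _ _).
have [s2 Fl] := IH (fun y yl => lU y (mem_behead (s:=a :: l) yl)).
exists (maxn s1 s2) => y; rewrite inE => /orP [/eqP ->|yl].
  by apply: F_mono Fa; apply: leq_maxl.
by apply: F_mono (Fl _ yl); apply: leq_maxr.
Qed.

Lemma chain_restrict_stable (L : pset) M :
  (forall s, exists n, card_eq (restrict L (F s)) n /\ n < M) ->
  exists s0, forall s y, s0 <= s -> (restrict L chain_union y <-> restrict L (F s) y).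
Proof.
move=> bnd.
have [l [_ lU]] : exists l : seq pt, uniq l /\ (forall y, y \in l <-> restrict L chain_union y).
  apply: (@enum_of_bounded_uniq _ M) => l ul lU.
  have [s0 Fl] := chain_seq_sub (fun y yl => proj2 (lU y yl)).
  have [n [Fn nM]] := bnd s0.
  have := card_eq_size_le Fn ul (fun y yl => conj (proj1 (lU y yl)) (Fl y yl)); lia.
have [s0 Fl] := chain_seq_sub (fun y yl => proj2 (proj1 (lU y) yl)).
exists s0 => s y s0s; split => [yU|[Ly Fy]]; last by split => //; exists s.
by split; [case: yU | apply: F_mono s0s _; apply/Fl/lU].
Qed.

End IncreasingChain.

Definition T_closure (Z B : pset) : pset := chain_union (fun t => T_iter Z t B).

Lemma T_iter_mono Z (B : pset) s s' y : s <= s' -> T_iter Z s B y -> T_iter Z s' B y.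
Proof. by move=> /subnK <-; elim: (s' - s) => [//|d IH] /= /IH; left. Qed.

Definition bounded_by (Z : pset) (M : nat) : Prop := forall p, Z p -> p.1 < M /\ p.2 < M.

Lemma bounded_of_finite (Z : pset) : finite_set Z -> exists M, bounded_by Z M.
Proof.
move=> [s Zs]; exists (foldr (fun p m => maxn (maxn p.1 p.2).+1 m) 0 s) => p /Zs.
by elim: s {Zs} => [//|a s IH]; rewrite inE => /orP [/eqP ->|/IH] /=; lia.
Qed.

Lemma bounded_Z_shift (Z : pset) k M : bounded_by Z M -> bounded_by (Z_shift Z k) M.
Proof. by move=> ZM p [u [v [/ZM /= uvM _ _ ->]]] /=; lia. Qed.

Lemma zero_set_downward (Z : pset) u v r c :
  is_zero_set Z -> Z (u, v) -> r <= u -> c <= v -> Z (r, c).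
Proof.
move=> [R ZR] /ZR [a [b [Rab [/= ua vb]]]] ru cv.
by apply/ZR; exists a, b; split => //=; lia.
Qed.

(* A point never reached keeps rc_in at every stage, so its bounded row and
   column traces stabilise and rc_in passes to the limit. *)
Lemma T_closure_closed Z (B : pset) M x :
  bounded_by Z M -> ~ rc_in Z x (T_closure Z B) -> T_closure Z B x.
Proof.
move=> ZM rcN; apply: NNPP => xN; apply: rcN.
have rc_s : forall s, rc_in Z x (T_iter Z s B).
  move=> s; apply: NNPP => rcN; apply: xN; exists s.+1 => /=.
  by case: (classic (T_iter Z s B x)) => xs; [left | right].
have mono := @T_iter_mono Z B.
have [sr rowE] : exists sr, forall s y, sr <= s ->
    (row_set x (T_closure Z B) y <-> row_set x (T_iter Z s B) y).
  apply: (chain_restrict_stable mono (L := fun y => y.2 = x.2) (M := M)) => s.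
  by have [r [c [rn _ /ZM [rM _]]]] := rc_s s; exists r.
have [sc colE] : exists sc, forall s y, sc <= s ->
    (col_set x (T_closure Z B) y <-> col_set x (T_iter Z s B) y).
  apply: (chain_restrict_stable mono (L := fun y => y.1 = x.1) (M := M)) => s.
  by have [r [c [_ cn /ZM [_ cM]]]] := rc_s s; exists c.
apply: (rc_in_ext _ _ (rc_s (maxn sr sc))) => y; apply: iff_sym.
  by apply: rowE; apply: leq_maxl.
by apply: colE; apply: leq_maxr.
Qed.

Section ShiftedSpan.

Variables (Z : pset) (k : nat) (A : pset).
Hypothesis Z_zero : is_zero_set Z.

Let C : pset := T_closure (Z_shift Z k) (A_gt A k).
Let D : pset := fun y => A y /\ ~ A_gt A k y.

Lemma row_sparse x : atmost (row_set x D) k.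
Proof.
apply: atmost_of_inhabited => y [yx [Ay yN]].
have : ~ card_gt (row_set y A) k by move=> gt; apply: yN; split => //; left.
by move/atmost_of_not_card_gt; apply: atmost_sub => z [zx [Az _]]; split; rewrite ?zx.
Qed.

Lemma col_sparse x : atmost (col_set x D) k.
Proof.
apply: atmost_of_inhabited => y [yx [Ay yN]].
have : ~ card_gt (col_set y A) k by move=> gt; apply: yN; split => //; right.
by move/atmost_of_not_card_gt; apply: atmost_sub => z [zx [Az _]]; split; rewrite ?zx.
Qed.

Lemma rc_in_shift_cover (Q : pset) x :
  (forall y, Q y -> C y \/ D y) -> rc_in (Z_shift Z k) x C -> rc_in Z x Q.
Proof.
move=> QCD [r [c [rC cC [u [v [Zuv ku kv [er ec]]]]]]].
have [m1 [rQ m1le]] : exists m, card_eq (row_set x Q) m /\ m <= r + k.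
  apply/card_eq_atmost/(atmost_cover _ (atmost_card_eq rC) (row_sparse x)).
  by move=> y [yx /QCD [Cy|Dy]]; [left|right].
have [m2 [cQ m2le]] : exists m, card_eq (col_set x Q) m /\ m <= c + k.
  apply/card_eq_atmost/(atmost_cover _ (atmost_card_eq cC) (col_sparse x)).
  by move=> y [yx /QCD [Cy|Dy]]; [left|right].
by exists m1, m2; split => //; apply: (zero_set_downward Z_zero Zuv); lia.
Qed.

Lemma T_iter_sub_cover M t y :
  bounded_by Z M -> T_iter Z t A y -> C y \/ D y.
Proof.
move=> ZM; elim: t y => [|t IH] y /=.
  by move=> Ay; case: (classic (A_gt A k y)) => yB; [left; exists 0 | right].
move=> [/IH //|[_ rcN]]; left.
apply: (T_closure_closed (bounded_Z_shift ZM)) => rcC.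
exact/rcN/(rc_in_shift_cover IH).
Qed.

End ShiftedSpan.

Theorem mainTheorem12 (Z : pset) (k : nat) (A : pset) :
  is_zero_set Z -> finite_set Z ->
  spans Z A -> spans (Z_shift Z k) (A_gt A k).
Proof.
move=> Z_zero /bounded_of_finite [M ZM] A_spans x.
apply: (T_closure_closed (bounded_Z_shift ZM)) => rcC.
apply: (@rc_in_full_false Z x); apply: (rc_in_shift_cover Z_zero) rcC => y _.
by have [t] := A_spans y; apply: T_iter_sub_cover ZM.
Qed.
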